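(* Consider the 2-Opt heuristic: start with an arbitrary tour $T$; while there exists an improving 2-change in $T$, perform an improving 2-change; output $T$. For every metric TSP instance with $n\ge 3$ cities, every tour that the 2-Opt heuristic can output (for any starting tour and any choice of improving 2-changes) has length at most $\sqrt{n/2}$ times the length of a shortest tour. Moreover, for every positive integer $k$ and $n=2k^2$ there exists a metric TSP instance with $n$ cities and a starting tour for which the 2-Opt heuristic outputs a tour of length exactly $\sqrt{n/2}$ times the length of a shortest tour (which is positive). In this sense the approximation ratio of the 2-Opt heuristic on metric TSP is $\sqrt{n/2}$, and this is tight.
   Context: A metric TSP instance with $n$ cities consists of a complete undirected graph $G$ on $n$ vertices together with a distance function $c: E(G)\to\mathbb{R}_{\ge 0}$ satisfying the triangle inequality $c(x,y)+c(y,z)\ge c(x,z)$ for all vertices $x,y,z$. A tour is a cycle in $G$ containing all vertices; its length is $c(T)=\sum_{e\in E(T)}c(e)$. Tours are regarded as oriented cycles. For two edges $(a,b)$ and $(x,y)$ of an oriented tour, the 2-change replaces them by $(a,x)$ and $(b,y)$ (reversing the segment from $b$ to $x$), yielding a tour; it is improving if $c(a,x)+c(b,y) < c(a,b)+c(x,y)$. An algorithm has approximation ratio $\alpha(n)\ge 1$ if on every instance with $n$ vertices it finds a tour of length at most $\alpha(n)$ times the length of a shortest tour. *)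

From HB Require Import structures.
From mathcomp Require Import all_boot all_order all_algebra.
Set Implicit Arguments. Unset Strict Implicit. Unset Printing Implicit Defensive.
Import Order.TTheory GRing.Theory Num.Theory.
Local Open Scope ring_scope.

Section TSP.
Variables (R : rcfType) (n : nat).
Implicit Types (c : 'I_n -> 'I_n -> R) (s t : seq 'I_n).

(* Metric distance function on the complete graph K_n.  The diagonal values
   c x x are never used by tours; we fix them to 0. *)
Definition metric c : Prop :=
  [/\ forall x, c x x = 0,
      forall x y, c x y = c y x,
      forall x y, 0 <= c x y
    & forall x y z, c x z <= c x y + c y z].

(* A tour (oriented cycle through all vertices) is given by the cyclic
   sequence of its vertices: each vertex appears exactly once. *)
Definition is_tour s : Prop := perm_eq s (enum 'I_n).

Definition tour_edges s : seq ('I_n * 'I_n) := zip s (rot 1 s).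

Definition tour_length c s : R := \sum_(e <- tour_edges s) c e.1 e.2.

(* The 2-change on the edges (a,b) = (s_i, s_{i+1}) and
   (x,y) = (s_j, s_{j+1 mod n}), for i < j: replace them by (a,x) and (b,y),
   reversing the segment b ... x. *)
Definition two_change s (i j : nat) : seq 'I_n :=
  take i.+1 s ++ rev (drop i.+1 (take j.+1 s)) ++ drop j.+1 s.

Definition improving_2change c s (i j : nat) : Prop :=
  if s is x0 :: _ then
    let a := nth x0 s i in
    let b := nth x0 s i.+1 in
    let x := nth x0 s j in
    let y := nth x0 s (j.+1 %% size s) in
    (i < j)%N /\ (j < size s)%N /\ c a x + c b y < c a b + c x y
  else False.

Definition two_opt_step c s t : Prop :=
  exists i j, improving_2change c s i j /\ t = two_change s i j.

Inductive two_opt_reach c : seq 'I_n -> seq 'I_n -> Prop :=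
| reach_refl s : two_opt_reach c s s
| reach_step s t u : two_opt_step c s t -> two_opt_reach c t u ->
                     two_opt_reach c s u.

Definition two_optimal c s : Prop := forall i j, ~ improving_2change c s i j.

Definition two_opt_output c s0 t : Prop :=
  is_tour s0 /\ two_opt_reach c s0 t /\ two_optimal c t.

End TSP.

From HB Require Import structures.
From mathcomp Require Import all_boot all_order all_algebra.
From mathcomp Require Import ring lra zify.
Set Implicit Arguments. Unset Strict Implicit. Unset Printing Implicit Defensive.
Import Order.TTheory GRing.Theory Num.Theory.
Local Open Scope ring_scope.

(* Place every city on a circle of circumference L = c(opt) at its arc-length
   position along an optimal tour; then c(u, v) is at most the circular distance
   of the positions.  If T is 2-optimal with edges (u_i, v_i) of lengths r_i, the
   inequality r_i + r_j <= c(u_i, u_j) + c(v_i, v_j) says that the l1-balls of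
   radius r_i around the points (pos u_i, pos v_i) of the torus (R/LZ)^2 have
   disjoint interiors.  Their areas 2 r_i^2 therefore sum to at most L^2 (areas
   are computed slice by slice with the trapezoid rule, exact here because the
   slice widths are piecewise affine), and Cauchy-Schwarz gives
   c(T) = sum r_i <= sqrt(n/2) L.

   For tightness, split n = 2k^2 cities into 2k groups of k cities, at distance
   0 inside a group, 1 between groups of different parity and 2 otherwise.  An
   optimal tour visits the groups in order and has length 2k.  A tour following
   an Euler circuit of the complete bipartite digraph between even and odd
   groups has length 2k^2, and since it uses every ordered pair of groups at
   most once, no 2-change improves it. *)

Ltac split_minmax_lra :=
  repeat match goal with
  | |- context[`|?a|] => let H := fresh in
      case: (lerP 0 a) => H; [rewrite (ger0_norm H) | rewrite (ltr0_norm H)]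
  | |- context[Num.min ?a ?b] => case: (lerP a b) => ?
  | |- context[Num.max ?a ?b] => case: (lerP a b) => ?
  end; lra.

Section CircleDistance.
Variable R : realFieldType.
Implicit Types L x y z : R.

(* The distance in R/LZ between the classes of x and y, for x, y in [0, L]. *)
Definition circ_dist L x y : R := Num.min `|x - y| (L - `|x - y|).

Lemma circ_distC L x y : circ_dist L x y = circ_dist L y x.
Proof. by rewrite /circ_dist distrC. Qed.

Lemma circ_dist_le_norm L x y : circ_dist L x y <= `|x - y|.
Proof. rewrite /circ_dist; split_minmax_lra. Qed.

Lemma circ_dist_le_compl L x y : circ_dist L x y <= L - `|x - y|.
Proof. rewrite /circ_dist; split_minmax_lra. Qed.

Lemma circ_dist_le_half L x y : 2 * circ_dist L x y <= L.
Proof. rewrite /circ_dist; split_minmax_lra. Qed.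

Lemma le_circ_dist L x y z :
  x <= y -> z <= y - x -> z <= L - (y - x) -> z <= circ_dist L x y.
Proof. rewrite /circ_dist => *; split_minmax_lra. Qed.

Lemma circ_dist_ge0 L x y : 0 <= x <= L -> 0 <= y <= L -> 0 <= circ_dist L x y.
Proof. rewrite /circ_dist => /andP[? ?] /andP[? ?]; split_minmax_lra. Qed.

Lemma circ_dist_triangle L x y z : 0 <= x <= L -> 0 <= y <= L -> 0 <= z <= L ->
  circ_dist L x z <= circ_dist L x y + circ_dist L y z.
Proof. rewrite /circ_dist => /andP[? ?] /andP[? ?] /andP[? ?]; split_minmax_lra. Qed.

End CircleDistance.

Section Tent.
Variable R : realFieldType.
Implicit Types r z : R.

Definition tent r z : R := Num.max 0 (r - `|z|).

(* The integral of [tent r] over ]-oo, z]. *)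
Definition tent_area r z : R :=
  if z <= - r then 0 else if z <= 0 then (z + r) ^+ 2 / 2
  else if z <= r then r ^+ 2 - (r - z) ^+ 2 / 2 else r ^+ 2.

Lemma tent_below r z : 0 <= r -> z <= - r -> tent r z = 0 /\ tent_area r z = 0.
Proof. by move=> r0 zr; rewrite /tent /tent_area zr; split=> //; split_minmax_lra. Qed.

Lemma tent_rising r z : 0 <= r -> - r <= z <= 0 ->
  tent r z = z + r /\ tent_area r z = (z + r) ^+ 2 / 2.
Proof.
move=> r0 /andP[rz z0]; rewrite /tent /tent_area z0; split; first by split_minmax_lra.
case: (lerP z (- r)) => // zr; have -> : z = - r by lra.
by rewrite addNr expr0n mul0r.
Qed.

Lemma tent_falling r z : 0 <= r -> 0 <= z <= r ->
  tent r z = r - z /\ tent_area r z = r ^+ 2 - (r - z) ^+ 2 / 2.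
Proof.
move=> r0 /andP[z0 zr]; rewrite /tent /tent_area zr; split; first by split_minmax_lra.
case: (lerP z (- r)) => [zr'|_].
  have -> : z = 0 by lra.
  have -> : r = 0 by lra.
  ring.
case: (lerP z 0) => // z0'.
have -> : z = 0 by lra.
by rewrite subr0 add0r; field.
Qed.

Lemma tent_above r z : 0 <= r -> r <= z -> tent r z = 0 /\ tent_area r z = r ^+ 2.
Proof.
move=> r0 rz; rewrite /tent /tent_area; split; first by split_minmax_lra.
case: (lerP z (- r)) => [zr|_].
  have -> : r = 0 by lra.
  by rewrite expr0n.
case: (lerP z 0) => [z0|_].
  have -> : z = 0 by lra.
  have -> : r = 0 by lra.
  ring.
case: (lerP z r) => // zr.
have -> : z = r by lra.
by rewrite subrr expr0n mul0r subr0.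
Qed.

(* The trapezoid rule is exact on intervals where [tent r] is affine. *)
Lemma trapezoid_tent r a b : 0 <= r -> a <= b ->
  ~ (a < - r < b) -> ~ (a < 0 < b) -> ~ (a < r < b) ->
  (b - a) / 2 * (tent r a + tent r b) = tent_area r b - tent_area r a.
Proof.
move=> r0 ab n1 n2 n3.
case: (ltrP a (- r)) => ha.
  have hb : b <= - r by case: (lerP b (- r)) => // hb; case: n1; rewrite ha hb.
  have [-> ->] := tent_below r0 (ltW ha); have [-> ->] := tent_below r0 hb; ring.
case: (ltrP a 0) => ha'.
  have hb : b <= 0 by case: (lerP b 0) => // hb; case: n2; rewrite ha' hb.
  have [-> ->] := tent_rising r0 (ltac:(apply/andP; split; lra) : - r <= a <= 0).
  have [-> ->] := tent_rising r0 (ltac:(apply/andP; split; lra) : - r <= b <= 0).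
  ring.
case: (ltrP a r) => ha''.
  have hb : b <= r by case: (lerP b r) => // hb; case: n3; rewrite ha'' hb.
  have [-> ->] := tent_falling r0 (ltac:(apply/andP; split; lra) : 0 <= a <= r).
  have [-> ->] := tent_falling r0 (ltac:(apply/andP; split; lra) : 0 <= b <= r).
  ring.
have [-> ->] := tent_above r0 ha''; have [-> ->] := tent_above r0 (ltac:(lra) : r <= b).
ring.
Qed.

End Tent.

Section Trapezoid.
Variable R : realFieldType.
Implicit Types (B : seq R) (f g h : R -> R).

Definition trapz B f : R :=
  \sum_(0 <= t < (size B).-1) (B`_t.+1 - B`_t) / 2 * (f B`_t + f B`_t.+1).

Lemma trapz_telescope B f (F : R -> R) : (0 < size B)%N ->
  (forall t, (t.+1 < size B)%N ->
     (B`_t.+1 - B`_t) / 2 * (f B`_t + f B`_t.+1) = F B`_t.+1 - F B`_t) ->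
  trapz B f = F B`_(size B).-1 - F B`_0.
Proof.
move=> B0 h; rewrite /trapz; apply: (telescope_sumr_eq (fun t => F B`_t)) => //.
by move=> t /andP[_ ht]; apply: h; case: (size B) ht B0.
Qed.

Lemma trapzD B f g h : {in B, forall p, f p = g p + h p} ->
  trapz B f = trapz B g + trapz B h.
Proof.
move=> fE; rewrite /trapz -big_split; apply: eq_big_nat => t /andP[_ ht].
have ht' : (t.+1 < size B)%N by case: (size B) ht.
by rewrite !fE ?mem_nth //= ?(ltnW ht'); ring.
Qed.

Lemma trapz_sum (I : finType) B (F : I -> R -> R) :
  trapz B (fun z => \sum_i F i z) = \sum_i trapz B (F i).
Proof.
rewrite /trapz exchange_big /=; apply: eq_bigr => t _.
by rewrite -big_split /= mulr_sumr.
Qed.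

Lemma trapzZ B (a : R) f : trapz B (fun z => a * f z) = a * trapz B f.
Proof. by rewrite /trapz mulr_sumr; apply: eq_bigr => t _; ring. Qed.

Lemma nth_le_sorted B i j : sorted <=%O B -> (i <= j)%N -> (j < size B)%N ->
  B`_i <= B`_j.
Proof.
move=> sB ij jB; apply: (le_sorted_leq_nth 0 sB) => //; rewrite inE //.
exact: leq_ltn_trans ij jB.
Qed.

Lemma ler_trapz B f g : sorted <=%O B -> {in B, forall p, f p <= g p} ->
  trapz B f <= trapz B g.
Proof.
move=> sB fg; rewrite /trapz; apply: ler_sum_nat => t /andP[_ ht].
have ht' : (t.+1 < size B)%N by case: (size B) ht.
have := nth_le_sorted sB (leqnSn t) ht'.
have := fg _ (mem_nth 0 ht'); have := fg _ (mem_nth 0 (ltnW ht')).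
move=> *; apply: ler_wpM2l; lra.
Qed.

Lemma not_between_consecutive B t p : sorted <=%O B -> (t.+1 < size B)%N ->
  p \in B -> ~ (B`_t < p < B`_t.+1).
Proof.
move=> sB ht /(nthP 0) [s hs <-] /andP[h1 h2].
case: (leqP s t) => st; first by have := nth_le_sorted sB st (ltnW ht); lra.
by have := nth_le_sorted sB st hs; lra.
Qed.

Lemma trapz_tent B (c r : R) : sorted <=%O B -> (0 < size B)%N -> 0 <= r ->
  (forall p, p \in [:: c - r; c; c + r] -> B`_0 < p < B`_(size B).-1 -> p \in B) ->
  trapz B (fun z => tent r (z - c)) =
    tent_area r (B`_(size B).-1 - c) - tent_area r (B`_0 - c).
Proof.
move=> sB B0 r0 kinksB.
apply: (trapz_telescope (F := fun z => tent_area r (z - c))) => // t ht.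
have hfirst := nth_le_sorted sB (leq0n t) (ltnW ht).
have hlast := nth_le_sorted sB (ltac:(by case: (size B) ht) : (t.+1 <= (size B).-1)%N)
  (ltac:(by case: (size B) B0) : ((size B).-1 < size B)%N).
have gap p : p \in [:: c - r; c; c + r] -> ~ (B`_t < p < B`_t.+1).
  move=> hp /andP[h1 h2]; apply: (not_between_consecutive sB ht (p := p)).
    by apply: kinksB => //; apply/andP; split; lra.
  by apply/andP; split.
have e : B`_t.+1 - B`_t = (B`_t.+1 - c) - (B`_t - c) by ring.
rewrite e; apply: trapezoid_tent => //.
- by have := nth_le_sorted sB (leqnSn t) ht; lra.
- by move=> h; apply: (gap (c - r)); rewrite ?inE ?eqxx //; lra.
- by move=> h; apply: (gap c); rewrite ?inE ?eqxx ?orbT //; lra.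
- by move=> h; apply: (gap (c + r)); rewrite ?inE ?eqxx ?orbT //; lra.
Qed.

End Trapezoid.

Section Packing.
Variable R : realFieldType.

Definition circ_tent (L c r y : R) : R := Num.max 0 (r - circ_dist L y c).

Lemma circ_tent_ge0 (L c r y : R) : 0 <= circ_tent L c r y.
Proof. rewrite /circ_tent; split_minmax_lra. Qed.

Lemma circ_tent_le (L c r y : R) : 0 <= r -> 0 <= circ_dist L y c ->
  circ_tent L c r y <= r.
Proof. rewrite /circ_tent; split_minmax_lra. Qed.

Lemma circ_tent_gt0E (L c r y : R) : 0 < circ_tent L c r y ->
  circ_tent L c r y = r - circ_dist L y c.
Proof. rewrite /circ_tent; split_minmax_lra. Qed.

(* Unrolling the circle: for 2 r <= L only the three copies of the tent
   centred at c - L, c and c + L meet [0, L]. *)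
Lemma circ_tent_unroll (L c r y : R) : 0 <= y <= L -> 0 <= c <= L -> 0 <= r ->
  2 * r <= L ->
  circ_tent L c r y = tent r (y - (c - L)) + tent r (y - c) + tent r (y - (c + L)).
Proof.
move=> /andP[? ?] /andP[? ?] ? ?; rewrite /circ_tent /tent /circ_dist.
rewrite (ger0_norm (ltac:(lra) : 0 <= y - (c - L))).
rewrite (ler0_norm (ltac:(lra) : y - (c + L) <= 0)).
split_minmax_lra.
Qed.

Lemma sorted_chain_packing (I : eqType) (L : R) (x w : I -> R) (s : seq I) (k : I) :
  (forall i j, i != j -> 0 < w i -> 0 < w j -> w i + w j <= circ_dist L (x i) (x j)) ->
  uniq (k :: s) -> sorted (fun i j => x i <= x j) (k :: s) ->
  all (fun j => 0 < w j) (k :: s) ->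
  \sum_(j <- k :: s) 2 * w j - w k - w (last k s) <= x (last k s) - x k.
Proof.
move=> w_sep; elim: s k => [|a s IH] k; first by rewrite big_seq1 => *; lra.
rewrite cons_uniq => /andP[ka ua] /= /andP[xka sa] /and3P[wk wa ws].
have kna : k != a by apply: contraNneq ka => ->; rewrite inE eqxx.
have := IH a ua sa (ltac:(by rewrite /= wa ws)).
have := w_sep k a kna wk wa.
have := circ_dist_le_norm L (x k) (x a).
rewrite !big_cons distrC ger0_norm ?subr_ge0 //; lra.
Qed.

Lemma circle_packing (I : finType) (L : R) (x w : I -> R) :
  0 <= L -> (forall i, 0 <= w i) -> (forall i, 2 * w i <= L) ->
  (forall i j, i != j -> 0 < w i -> 0 < w j -> w i + w j <= circ_dist L (x i) (x j)) ->
  \sum_i 2 * w i <= L.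
Proof.
move=> L0 w0 wL w_sep.
set S := [seq i <- enum I | 0 < w i].
have -> : \sum_i 2 * w i = \sum_(i <- S) 2 * w i.
  rewrite big_filter (bigID (fun i => 0 < w i)) /= [X in _ + X]big1 ?addr0.
    by rewrite big_enum_cond.
  move=> i; rewrite -leNgt => wi.
  have -> : w i = 0 by apply/eqP; rewrite eq_le wi w0.
  by rewrite mulr0.
pose le := fun i j => x i <= x j.
have le_total : total le by move=> i j; rewrite /le le_total.
have pS : perm_eq (sort le S) S by rewrite perm_sort.
rewrite -(perm_big _ pS).
have uS : uniq (sort le S) by rewrite sort_uniq filter_uniq // enum_uniq.
have aS : all (fun j => 0 < w j) (sort le S) by rewrite (perm_all _ pS) filter_all.
have sS : sorted le (sort le S) := sort_sorted le_total S.
case E: (sort le S) uS aS sS => [|k s] uS aS sS; first by rewrite big_nil.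
have chain := sorted_chain_packing w_sep uS sS aS.
case: s {E} uS aS sS chain => [|a s] uS aS sS chain; first by rewrite big_seq1.
set l := last k (a :: s) in chain *.
have lk : l != k.
  by apply/eqP => lk; move: uS; rewrite cons_uniq -{1}lk /l /= mem_last.
have /allP wpos := aS.
have := w_sep _ _ lk (wpos _ (mem_last _ _)) (wpos _ (mem_head _ _)).
have := circ_dist_le_compl L (x l) (x k).
have := ler_norm (x l - x k).
lra.
Qed.

End Packing.

Section TorusPacking.
Variables (R : realFieldType) (I : finType) (L : R) (x y r : I -> R).
Hypotheses (L_ge0 : 0 <= L) (y_in : forall i, 0 <= y i <= L) (r_ge0 : forall i, 0 <= r i)
  (r_le : forall i, 2 * r i <= L)
  (r_sep : forall i j, i != j ->
     r i + r j <= circ_dist L (x i) (x j) + circ_dist L (y i) (y j)).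

(* The slice at height z of the l1-ball of radius r i around (x i, y i) on
   the torus is the arc of radius [circ_tent L (y i) (r i) z] around x i. *)
Local Notation width i := (circ_tent L (y i) (r i)).

Definition tent_kinks (c r : R) : seq R :=
  [:: c - L - r; c - L; c - L + r; c - r; c; c + r; c + L - r; c + L; c + L + r].

Let B : seq R := sort <=%O (0 :: L ::
  [seq p <- flatten [seq tent_kinks (y i) (r i) | i <- enum I] | 0 <= p <= L]).

Let B_sorted : sorted <=%O B.
Proof. exact/sort_sorted/le_total. Qed.

Let B_in p : p \in B -> 0 <= p <= L.
Proof.
rewrite mem_sort !inE => /orP[/eqP->|/orP[/eqP->|]]; rewrite ?lexx ?L_ge0 //.
by rewrite mem_filter => /andP[].
Qed.

Let B_size : (0 < size B)%N.
Proof. by rewrite size_sort. Qed.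

Let B_first : B`_0 = 0.
Proof.
have /(nthP 0) [s hs e] : 0 \in B by rewrite mem_sort inE eqxx.
have := nth_le_sorted B_sorted (leq0n s) hs.
by have /andP[+ _] := B_in (mem_nth 0 B_size); rewrite e; lra.
Qed.

Let B_last : B`_(size B).-1 = L.
Proof.
have lastB : ((size B).-1 < size B)%N by rewrite prednK.
have /(nthP 0) [s hs e] : L \in B by rewrite mem_sort !inE eqxx orbT.
have := nth_le_sorted B_sorted (ltac:(by rewrite -ltnS prednK) : (s <= (size B).-1)%N) lastB.
by have /andP[_ +] := B_in (mem_nth 0 lastB); rewrite e; lra.
Qed.

Let trapz_width i : trapz B (width i) = r i ^+ 2.
Proof.
have [yi0 yiL] := andP (y_in i); have ri0 := r_ge0 i; have riL := r_le i.
have kinksB c : c \in [:: y i - L; y i; y i + L] ->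
    forall p, p \in [:: c - r i; c; c + r i] -> B`_0 < p < B`_(size B).-1 -> p \in B.
  move=> hc p hp; rewrite B_first B_last => /andP[p0 pL].
  rewrite mem_sort !inE mem_filter (ltW p0) (ltW pL) /=; apply/orP; right; apply/orP; right.
  apply/flatten_mapP; exists i; first by rewrite mem_enum.
  by move: hc hp; rewrite /tent_kinks !inE => /or3P[]/eqP-> /or3P[]/eqP->;
    rewrite ?eqxx ?orbT.
rewrite (trapzD (g := fun z => tent (r i) (z - (y i - L)) + tent (r i) (z - y i))
                (h := fun z => tent (r i) (z - (y i + L)))); last first.
  by move=> p /B_in hp; rewrite circ_tent_unroll.
rewrite (trapzD (g := fun z => tent (r i) (z - (y i - L))) (h := fun z => tent (r i) (z - y i))) //.
rewrite !trapz_tent //; try by apply: kinksB; rewrite !inE eqxx ?orbT.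
rewrite B_first B_last.
have [_ ->] := tent_above ri0 (ltac:(lra) : r i <= L - (y i - L)).
have [_ ->] := tent_below ri0 (ltac:(lra) : 0 - (y i + L) <= - r i).
have -> : 0 - (y i - L) = L - y i by ring.
have -> : L - (y i + L) = 0 - y i by ring.
ring.
Qed.

Let slice_packing z : 0 <= z <= L -> \sum_i 2 * width i z <= L.
Proof.
move=> hz; apply: (circle_packing (x := x)) => // [i|i|i j ij wi wj].
- exact: circ_tent_ge0.
- by have := circ_tent_le (r_ge0 i) (circ_dist_ge0 hz (y_in i)); have := r_le i; lra.
have := r_sep ij; have := circ_dist_triangle (y_in i) hz (y_in j).
rewrite (circ_tent_gt0E wi) (circ_tent_gt0E wj) (circ_distC L (y i) z); lra.
Qed.

(* The balls have area 2 (r i)^2 and disjoint interiors in a torus of area L^2. *)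
Lemma torus_packing : \sum_i 2 * r i ^+ 2 <= L ^+ 2.
Proof.
have -> : \sum_i 2 * r i ^+ 2 = trapz B (fun z => \sum_i 2 * width i z).
  by rewrite trapz_sum; apply: eq_bigr => i _; rewrite trapzZ trapz_width.
apply: le_trans (ler_trapz (g := fun _ => L) B_sorted _) _.
  by move=> p /B_in; apply: slice_packing.
rewrite (trapz_telescope (F := fun z => L * z)) ?B_first ?B_last //.
  by rewrite mulr0 subr0 expr2.
by move=> t _; field.
Qed.

End TorusPacking.

Lemma cauchy_schwarz (R : realFieldType) (I : finType) (l : I -> R) :
  (\sum_i l i) ^+ 2 <= #|I|%:R * \sum_i l i ^+ 2.
Proof.
have : 0 <= \sum_i \sum_j (l i - l j) ^+ 2.
  by apply: sumr_ge0 => i _; apply: sumr_ge0 => j _; apply: sqr_ge0.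
have -> : \sum_i \sum_j (l i - l j) ^+ 2 =
    2 * (#|I|%:R * \sum_i l i ^+ 2) - 2 * (\sum_i l i) ^+ 2.
  transitivity (\sum_i (#|I|%:R * l i ^+ 2 + \sum_j l j ^+ 2 - 2 * (l i * \sum_j l j))).
    apply: eq_bigr => i _.
    rewrite (eq_bigr (fun j => l i ^+ 2 + l j ^+ 2 - 2 * (l i * l j))); last by move=> j _; ring.
    rewrite sumrB big_split /= sumr_const -mulr_natl -!mulr_sumr; ring.
  rewrite sumrB big_split /= sumr_const -!mulr_sumr -mulr_suml -mulr_natl expr2.
  rewrite (eq_card (B := I)) //; ring.
lra.
Qed.

Lemma sum_le_sqrt_card (R : rcfType) (I : finType) (l : I -> R) (L : R) :
  0 <= L -> (forall i, 0 <= l i) -> \sum_i 2 * l i ^+ 2 <= L ^+ 2 ->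
  \sum_i l i <= Num.sqrt (#|I|%:R / 2) * L.
Proof.
move=> L0 l0; rewrite -mulr_sumr => packing.
have sum_ge0 : 0 <= \sum_i l i by apply: sumr_ge0 => i _.
have card_ge0 : 0 <= (#|I|%:R : R) by [].
rewrite -(ler_sqr (x := \sum_i l i)) ?nnegrE ?mulr_ge0 ?sqrtr_ge0 //.
rewrite exprMn sqr_sqrtr ?divr_ge0 //.
apply: le_trans (cauchy_schwarz l) _.
rewrite -mulrA ler_wpM2l //; lra.
Qed.

Lemma nth_rot1 (T : Type) (x0 : T) (s : seq T) i : (i < size s)%N ->
  nth x0 (rot 1 s) i = nth x0 s (i.+1 %% size s).
Proof.
case: s => [//|a s] /= hi; rewrite rot1_cons nth_rcons.
case: ltnP => h; first by rewrite modn_small.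
have -> : i = size s by lia.
by rewrite eqxx modnn.
Qed.

Section Tours.
Variables (R : rcfType) (n : nat).
Implicit Types (c : 'I_n -> 'I_n -> R) (s t : seq 'I_n).

Lemma tour_size s : is_tour s -> size s = n.
Proof. by move=> st; rewrite (perm_size st) size_enum_ord. Qed.

Lemma tour_mem s v : is_tour s -> v \in s.
Proof. by move=> st; rewrite (perm_mem st) mem_enum. Qed.

Lemma tour_index_lt s v : is_tour s -> (index v s < n)%N.
Proof. by move=> st; rewrite -[X in (_ < X)%N](tour_size st) index_mem tour_mem. Qed.

Lemma tour_length_nth c s x0 : tour_length c s =
  \sum_(i < size s) c (nth x0 s i) (nth x0 s (i.+1 %% size s)).
Proof.
rewrite /tour_length /tour_edges (big_nth (x0, x0)) size_zip size_rot minnn big_mkord.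
by apply: eq_bigr => i _; rewrite nth_zip ?size_rot //= nth_rot1.
Qed.

Lemma perm_two_change s i j : (i < j)%N -> perm_eq (two_change s i j) s.
Proof.
move=> ij; rewrite /two_change.
have sE : s = take i.+1 s ++ drop i.+1 (take j.+1 s) ++ drop j.+1 s.
  rewrite catA -{1}(take_takel (i := i.+1) (j := j.+1) s) ?ltnS 1?ltnW //.
  by rewrite !cat_take_drop.
by rewrite [in X in perm_eq _ X]sE perm_cat2l perm_cat2r perm_rev.
Qed.

Lemma two_opt_reach_tour c s t : two_opt_reach c s t -> is_tour s -> is_tour t.
Proof.
elim=> [//|s1 t1 u1 [i [j [imp ->]]] _ IH] s1_tour; apply: IH.
apply: perm_trans s1_tour; apply: perm_two_change.
by case: s1 imp => [//|x0 s'] [].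
Qed.

Lemma two_opt_reach_optimal c s t : two_optimal c s -> two_opt_reach c s t -> t = s.
Proof.
move=> s_opt reach; case: reach s_opt => [//|s' t' u' [i [j [imp _]]] _ s'_opt].
by case: (s'_opt i j imp).
Qed.

Lemma two_optimal_ineq c t x0 i j : size t = n -> two_optimal c t ->
  (i < j)%N -> (j < n)%N ->
  c (nth x0 t i) (nth x0 t i.+1) + c (nth x0 t j) (nth x0 t (j.+1 %% n)) <=
  c (nth x0 t i) (nth x0 t j) + c (nth x0 t i.+1) (nth x0 t (j.+1 %% n)).
Proof.
case: t => [|a t] tn t_opt ij jn; first by move: tn => /= tn; lia.
have := t_opt i j; rewrite /improving_2change tn.
have j1n : (j.+1 %% n < size (a :: t))%N by rewrite tn ltn_mod; lia.
rewrite !(set_nth_default a x0) ?tn //; try lia.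
by rewrite leNgt => not_improving; apply/negP => imp; apply: not_improving.
Qed.

End Tours.

Section ArcPositions.
Variables (R : rcfType) (n : nat) (c : 'I_n -> 'I_n -> R) (opt : seq 'I_n) (x0 : 'I_n).
Hypotheses (c_metric : metric c) (opt_tour : is_tour opt).

Definition arc (k : nat) : R :=
  \sum_(0 <= m < k) c (nth x0 opt m) (nth x0 opt (m.+1 %% n)).

Local Notation L := (arc n).
Local Notation pos v := (arc (index v opt)).

Let c_refl x : c x x = 0. Proof. by case: c_metric. Qed.
Let c_sym x y : c x y = c y x. Proof. by case: c_metric. Qed.
Let c_ge0 x y : 0 <= c x y. Proof. by case: c_metric. Qed.
Let c_triangle x y z : c x z <= c x y + c y z. Proof. by case: c_metric. Qed.

Lemma arc0 : arc 0 = 0.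
Proof. by rewrite /arc big_geq. Qed.

Lemma arcS k : arc k.+1 = arc k + c (nth x0 opt k) (nth x0 opt (k.+1 %% n)).
Proof. by rewrite /arc big_nat_recr. Qed.

Lemma le_arc a b : (a <= b)%N -> arc a <= arc b.
Proof.
move=> ab; rewrite /arc (big_cat_nat (leq0n a) ab) /= lerDl.
by apply: sumr_ge0 => m _; apply: c_ge0.
Qed.

Lemma cost_le_arc a b : (a <= b)%N -> (b < n)%N ->
  c (nth x0 opt a) (nth x0 opt b) <= arc b - arc a.
Proof.
elim: b => [|b IH]; first by rewrite leqn0 => /eqP-> _; rewrite c_refl subrr.
rewrite leq_eqVlt => /orP[/eqP-> _|]; first by rewrite c_refl subrr.
rewrite ltnS => ab bn; have := IH ab (ltnW bn).
have := c_triangle (nth x0 opt a) (nth x0 opt b) (nth x0 opt b.+1).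
rewrite arcS modn_small //; lra.
Qed.

Lemma cost_le_arc_wrap a b : (a <= b)%N -> (b < n)%N ->
  c (nth x0 opt b) (nth x0 opt a) <= L - arc b + arc a.
Proof.
move=> ab bn; have n_gt0 : (0 < n)%N by lia.
have to_last := cost_le_arc (ltac:(lia) : (b <= n.-1)%N) (ltac:(lia) : (n.-1 < n)%N).
have from_first := cost_le_arc (leq0n a) (leq_ltn_trans ab bn).
have Lwrap : L = arc n.-1 + c (nth x0 opt n.-1) (nth x0 opt 0).
  by rewrite -{1}(prednK n_gt0) arcS prednK // modnn.
have := c_triangle (nth x0 opt b) (nth x0 opt n.-1) (nth x0 opt a).
have := c_triangle (nth x0 opt n.-1) (nth x0 opt 0) (nth x0 opt a).
rewrite arc0 in from_first.
lra.
Qed.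

Lemma arc_pos_in v : 0 <= pos v <= L.
Proof. by rewrite -{1}arc0 !le_arc // ltnW // tour_index_lt. Qed.

(* Going around opt in either direction from u to v bounds c u v. *)
Lemma cost_le_circ_dist u v : c u v <= circ_dist L (pos u) (pos v).
Proof.
wlog uv : u v / (index u opt <= index v opt)%N.
  move=> hwlog; case: (leqP (index u opt) (index v opt)) => [|/ltnW] h; first exact: hwlog.
  by rewrite circ_distC c_sym; apply: hwlog.
have := cost_le_arc uv (tour_index_lt v opt_tour).
have := cost_le_arc_wrap uv (tour_index_lt v opt_tour).
rewrite !nth_index ?tour_mem // (c_sym v u).
move=> wrap direct; apply: le_circ_dist; first exact: le_arc; lra.
Qed.

Lemma tour_length_arc : tour_length c opt = L.
Proof. by rewrite (tour_length_nth c opt x0) (tour_size opt_tour) /arc big_mkord. Qed.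

End ArcPositions.

Section TwoOptUpperBound.
Variables (R : rcfType) (n : nat) (c : 'I_n -> 'I_n -> R) (opt t : seq 'I_n) (x0 : 'I_n).
Hypotheses (c_metric : metric c) (opt_tour : is_tour opt) (t_tour : is_tour t)
  (t_opt : two_optimal c t).

Local Notation L := (arc c opt x0 n).
Local Notation pos v := (arc c opt x0 (index v opt)).
Local Notation u i := (nth x0 t i).
Local Notation v i := (nth x0 t (i.+1 %% n)).

Let edge_sep (i j : 'I_n) : i != j ->
  c (u i) (v i) + c (u j) (v j) <=
  circ_dist L (pos (u i)) (pos (u j)) + circ_dist L (pos (v i)) (pos (v j)).
Proof.
wlog ij : i j / (i < j)%N.
  move=> hwlog; case: (ltngtP i j) => [lt|gt|/val_inj->]; last by rewrite eqxx.
    exact: hwlog.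
  rewrite eq_sym => ji.
  by rewrite addrC (circ_distC L (pos (u i))) (circ_distC L (pos (v i))) hwlog.
have := two_optimal_ineq x0 (tour_size t_tour) t_opt ij (ltn_ord j).
rewrite (modn_small (leq_ltn_trans ij (ltn_ord j))).
have := cost_le_circ_dist x0 c_metric opt_tour (u i) (u j).
have := cost_le_circ_dist x0 c_metric opt_tour (u i.+1) (v j).
lra.
Qed.

Lemma two_optimal_length_le :
  tour_length c t <= Num.sqrt (n%:R / 2) * tour_length c opt.
Proof.
have c_ge0 x y : 0 <= c x y by case: c_metric.
rewrite (tour_length_nth c t x0) (tour_length_arc c x0 opt_tour) (tour_size t_tour).
rewrite -[X in Num.sqrt (X%:R / 2)]card_ord.
have L_ge0 : 0 <= L by apply: sumr_ge0.
apply: sum_le_sqrt_card => //.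
apply: (torus_packing L_ge0 _ _ _ edge_sep) => // i.
- exact: arc_pos_in.
- have := circ_dist_le_half L (pos (u i)) (pos (v i)).
  by have := cost_le_circ_dist x0 c_metric opt_tour (u i) (v i); lra.
Qed.

End TwoOptUpperBound.

Section EulerTourIndex.
Local Open Scope nat_scope.
Variable k : nat.
Hypothesis k_gt0 : 0 < k.

(* Position 2 (p k + e) of the tour holds slot p of the even group 2 e, and
   position 2 (p k + e) + 1 holds slot p of the odd group 2 ((e + p) mod k) + 1. *)
Definition euler_group i :=
  let t := i./2 in
  if odd i then (2 * ((t %% k + t %/ k) %% k)).+1 else 2 * (t %% k).

Definition euler_slot i := i./2 %/ k.

Definition euler_vertex i := euler_group i * k + euler_slot i.

Lemma half_lt i : i < 2 * k ^ 2 -> i./2 < k ^ 2.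
Proof. by move=> i_lt; have := odd_double_half i; rewrite -muln2; lia. Qed.

Lemma euler_slot_lt i : i < 2 * k ^ 2 -> euler_slot i < k.
Proof. by move/half_lt; rewrite /euler_slot ltn_divLR // -expnSr. Qed.

Lemma euler_group_lt i : euler_group i < 2 * k.
Proof.
rewrite /euler_group; set t := i./2.
by case: (odd i); [have := ltn_pmod (t %% k + t %/ k) k_gt0 | have := ltn_pmod t k_gt0]; lia.
Qed.

Lemma odd_euler_group i : odd (euler_group i) = odd i.
Proof. by rewrite /euler_group; case: (odd i); rewrite /= oddM. Qed.

Lemma euler_vertex_lt i : i < 2 * k ^ 2 -> euler_vertex i < 2 * k ^ 2.
Proof.
move=> i_lt; rewrite /euler_vertex.
by have := euler_slot_lt i_lt; have := euler_group_lt i; nia.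
Qed.

Lemma euler_vertex_group i : i < 2 * k ^ 2 -> euler_vertex i %/ k = euler_group i.
Proof.
by move=> i_lt; rewrite /euler_vertex divnMDl // divn_small ?addn0 // euler_slot_lt.
Qed.

Lemma euler_vertex_slot i : i < 2 * k ^ 2 -> euler_vertex i %% k = euler_slot i.
Proof. by move=> i_lt; rewrite /euler_vertex modnMDl modn_small // euler_slot_lt. Qed.

Lemma eq_odd_half i j : odd i = odd j -> i./2 = j./2 -> i = j.
Proof. by move=> ij ij2; rewrite -(odd_double_half i) -(odd_double_half j) ij ij2. Qed.

Lemma eq_modD a b p : a < k -> b < k -> (p + a) %% k = (p + b) %% k -> a = b.
Proof.
move=> ak bk /eqP; rewrite -/(_ == _ %[mod k]) eqn_modDl !modn_small //.
by move/eqP.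
Qed.

Lemma euler_vertex_inj i j : i < 2 * k ^ 2 -> j < 2 * k ^ 2 ->
  euler_vertex i = euler_vertex j -> i = j.
Proof.
move=> i_lt j_lt e.
have eG : euler_group i = euler_group j by rewrite -euler_vertex_group // e euler_vertex_group.
have eS : euler_slot i = euler_slot j by rewrite -euler_vertex_slot // e euler_vertex_slot.
have eo : odd i = odd j by rewrite -odd_euler_group eG odd_euler_group.
apply: eq_odd_half => //; move: eG eS; rewrite /euler_group /euler_slot eo.
set t := i./2; set t' := j./2 => eG eS.
suff tk : t %% k = t' %% k by rewrite (divn_eq t k) (divn_eq t' k) eS tk.
case: (odd j) eG => [[/eqP]|/eqP]; rewrite eqn_mul2l /= => /eqP eG //.
apply: (@eq_modD _ _ (t %/ k)); try exact: ltn_pmod.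
by rewrite addnC eG [in RHS]eS addnC.
Qed.

Lemma eq_of_mod_diag t t' : t < k ^ 2 -> t' < k ^ 2 -> t %% k = t' %% k ->
  (t %% k + t %/ k) %% k = (t' %% k + t' %/ k) %% k -> t = t'.
Proof.
move=> t_lt t'_lt tk; rewrite tk => /eq_modD tk'.
by rewrite (divn_eq t k) (divn_eq t' k) tk tk' // ltn_divLR // -expnSr.
Qed.

Lemma euler_group_succ_even i : ~~ odd i -> i < 2 * k ^ 2 ->
  euler_group (i.+1 %% (2 * k ^ 2)) = (2 * ((i./2 %% k + i./2 %/ k) %% k)).+1.
Proof.
move=> /negbTE ev i_lt.
have i1_lt : i.+1 < 2 * k ^ 2 by have := odd_double_half i; rewrite ev -muln2; lia.
rewrite modn_small // /euler_group /= ev /=.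
by have -> : uphalf i = i./2 by rewrite -{1}(odd_double_half i) ev uphalf_double.
Qed.

Lemma euler_group_succ_odd i : odd i -> i < 2 * k ^ 2 ->
  euler_group (i.+1 %% (2 * k ^ 2)) = 2 * ((i./2).+1 %% k).
Proof.
move=> od i_lt.
have -> : i.+1 %% (2 * k ^ 2) = 2 * ((i./2).+1 %% k ^ 2).
  rewrite muln_modr; congr (_ %% _).
  by have := odd_double_half i; rewrite od -muln2; lia.
rewrite /euler_group oddM /= [X in X./2]mul2n doubleK.
by rewrite modn_dvdm // dvdn_exp.
Qed.

Lemma euler_edge_inj i j : i < 2 * k ^ 2 -> j < 2 * k ^ 2 ->
  euler_group i = euler_group j ->
  euler_group (i.+1 %% (2 * k ^ 2)) = euler_group (j.+1 %% (2 * k ^ 2)) -> i = j.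
Proof.
move=> i_lt j_lt eG eG1.
have eo : odd i = odd j by rewrite -odd_euler_group eG odd_euler_group.
have dbl a b : 2 * a = 2 * b -> a = b by lia.
have sdbl a b : (2 * a).+1 = (2 * b).+1 -> a = b by lia.
have [tk diag] : i./2 %% k = j./2 %% k /\
    (i./2 %% k + i./2 %/ k) %% k = (j./2 %% k + j./2 %/ k) %% k.
  case oi: (odd i) eG eG1; move: eo; rewrite oi => /esym oj.
  - rewrite euler_group_succ_odd ?euler_group_succ_odd // /euler_group oi oj.
    move=> /sdbl diag /dbl tk1; split=> //.
    by apply: (@eq_modD _ _ 1); rewrite ?ltn_pmod // !modnDmr !add1n.
  - have ej : ~~ odd j by rewrite oj.
    rewrite euler_group_succ_even ?euler_group_succ_even ?oi //.
    by rewrite /euler_group oi (negbTE ej) => /dbl tk /sdbl diag.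
by apply: eq_odd_half => //; apply: eq_of_mod_diag; rewrite ?half_lt.
Qed.

End EulerTourIndex.

Lemma exists_exit (M : nat) (P : pred nat) : (0 < M)%N ->
  (exists2 i, (i < M)%N & P i) -> (exists2 j, (j < M)%N & ~~ P j) ->
  exists2 i, (i < M)%N & P i && ~~ P (i.+1 %% M)%N.
Proof.
move=> M_gt0 [i0 i0M Pi0] [j jM Pj].
have [/existsP [i hi]|/existsPn noexit] := boolP [exists i : 'I_M, P i && ~~ P (i.+1 %% M)%N].
  by exists i.
suff allP m : P ((i0 + m) %% M)%N.
  have := allP (j + M - i0)%N; rewrite (_ : (i0 + (j + M - i0) = j + M)%N); last lia.
  by rewrite modnDr modn_small // (negbTE Pj).
elim: m => [|m IH]; first by rewrite addn0 modn_small.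
have := noexit (Ordinal (ltn_pmod (i0 + m) M_gt0)); rewrite /= IH /= negbK.
by rewrite -[_.+1]addn1 modnDml addn1 addnS.
Qed.

Section GroupDistance.
Variable R : realFieldType.

Definition group_dist (a b : nat) : R :=
  if a == b then 0 else if odd a == odd b then 2 else 1.

Lemma group_dist_ge0 a b : 0 <= group_dist a b.
Proof. by rewrite /group_dist; case: ifP => _ //; case: ifP => _; lra. Qed.

Lemma group_distC a b : group_dist a b = group_dist b a.
Proof. by rewrite /group_dist eq_sym [odd b == _]eq_sym. Qed.

Lemma group_dist_triangle a b d : group_dist a d <= group_dist a b + group_dist b d.
Proof.
have [<-|ab] := eqVneq a b; first by rewrite {2}/group_dist eqxx add0r.
have [<-|bd] := eqVneq b d; first by rewrite {3}/group_dist eqxx addr0.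
rewrite /group_dist (negbTE ab) (negbTE bd).
by case: (a == d); case: (odd a); case: (odd b); case: (odd d) => /=; lra.
Qed.

Lemma group_dist_ge1 a b : a != b -> 1 <= group_dist a b.
Proof. by rewrite /group_dist => /negbTE ->; case: ifP => _; lra. Qed.

Lemma group_dist_alt a b : odd b = ~~ odd a -> group_dist a b = 1.
Proof.
move=> ba; rewrite /group_dist ba; have [e|_] := eqVneq a b.
  by move: ba; rewrite e; case: (odd b).
by case: (odd a).
Qed.

Lemma group_dist_2change a b x y : odd b = ~~ odd a -> odd y = ~~ odd x ->
  (a, b) != (x, y) ->
  group_dist a b + group_dist x y <= group_dist a x + group_dist b y.
Proof.
move=> ba yx abxy; rewrite (group_dist_alt ba) (group_dist_alt yx).
have [ax|ax] := eqVneq a x.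
  have by' : b != y by apply: contra_neq abxy => <-; rewrite ax.
  rewrite /group_dist ax eqxx (negbTE by') ba yx ax eqxx; lra.
have [eby|by'] := eqVneq b y; last by have := group_dist_ge1 ax; have := group_dist_ge1 by'; lra.
have ax' : odd a = odd x by apply: negb_inj; rewrite -ba -yx eby.
by rewrite /group_dist (negbTE ax) eby eqxx ax' eqxx; lra.
Qed.

Lemma exits_le_group_dist (a b m : nat) :
  \sum_(q < m) (((a == q) && (b != q))%:R : R) <= group_dist a b.
Proof.
have [<-|ab] := eqVneq a b.
  by rewrite big1 ?group_dist_ge0 // => q _; case: (eqVneq a q).
apply: le_trans (group_dist_ge1 ab).
case: (ltnP a m) => [am|ma].
  rewrite (bigD1 (Ordinal am)) //= eqxx eq_sym ab big1 ?addr0 // => q.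
  by rewrite -val_eqE /= eq_sym => /negbTE ->.
rewrite big1 ?ler01 // => q _.
by have /negbTE -> : a != q by apply/eqP => aq; move: ma; rewrite aq leqNgt ltn_ord.
Qed.

End GroupDistance.

Section TightInstance.
Variables (R : rcfType) (k : nat).
Hypothesis k_gt0 : (0 < k)%N.
Local Notation N := (2 * k ^ 2)%N.

Definition group_cost (u v : 'I_N) : R := group_dist R (u %/ k) (v %/ k).

Lemma group_cost_metric : metric group_cost.
Proof.
split=> [x|x y|x y|x y z]; rewrite /group_cost.
- by rewrite /group_dist eqxx.
- exact: group_distC.
- exact: group_dist_ge0.
- exact: group_dist_triangle.
Qed.

Let N_gt0 : (0 < N)%N.
Proof. by rewrite muln_gt0 expn_gt0 k_gt0. Qed.

Let x0 : 'I_N := Ordinal N_gt0.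

Definition euler_ord (i : 'I_N) : 'I_N := Ordinal (euler_vertex_lt k_gt0 (ltn_ord i)).

Definition euler_tour : seq 'I_N := map euler_ord (enum 'I_N).

Lemma euler_tour_is_tour : is_tour euler_tour.
Proof.
have euler_ord_inj : injective euler_ord.
  move=> i j /(congr1 val) /= /(euler_vertex_inj k_gt0 (ltn_ord i) (ltn_ord j)).
  exact: val_inj.
apply: uniq_perm; rewrite ?(map_inj_uniq euler_ord_inj) ?enum_uniq // => v.
have [f _ fK] := injF_bij euler_ord_inj.
by rewrite mem_enum -[v]fK map_f ?mem_enum.
Qed.

Lemma size_euler_tour : size euler_tour = N.
Proof. by rewrite size_map size_enum_ord. Qed.

Lemma euler_tour_group m : (m < N)%N -> (nth x0 euler_tour m %/ k)%N = euler_group k m.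
Proof.
move=> mN; rewrite /euler_tour (nth_map x0) ?size_enum_ord //= nth_enum_ord //.
exact: euler_vertex_group.
Qed.

Let odd_succ_mod m : odd (m.+1 %% N) = ~~ odd m.
Proof. by rewrite odd_mod //= oddM. Qed.

Lemma euler_tour_length : tour_length group_cost euler_tour = N%:R.
Proof.
rewrite (tour_length_nth group_cost euler_tour x0) size_euler_tour.
rewrite (eq_bigr (fun _ => 1)) ?sumr_const ?card_ord // => i _.
rewrite /group_cost !euler_tour_group ?ltn_pmod //.
by apply: group_dist_alt; rewrite !odd_euler_group odd_succ_mod.
Qed.

Lemma euler_tour_two_optimal : two_optimal group_cost euler_tour.
Proof.
move=> i j; rewrite /improving_2change size_euler_tour.
case E: euler_tour => [|a s]; first by [].
rewrite -E => -[ij [jN]]; apply/negP; rewrite -leNgt.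
have iN : (i < N)%N by lia.
have i1N : (i.+1 < N)%N by lia.
rewrite !(set_nth_default x0) ?size_euler_tour ?ltn_pmod //.
rewrite /group_cost !euler_tour_group ?ltn_pmod // -(modn_small i1N).
apply: group_dist_2change; rewrite ?odd_euler_group ?odd_succ_mod //.
apply: contraTneq ij => -[ij1 ij2]; rewrite (euler_edge_inj k_gt0 iN jN ij1 ij2).
by rewrite ltnn.
Qed.

Lemma enum_tour_length : tour_length group_cost (enum 'I_N) = (2 * k)%:R.
Proof.
rewrite (tour_length_nth group_cost (enum 'I_N) x0) size_enum_ord.
set F := fun i : nat => group_dist R (i %/ k) ((i.+1 %% N) %/ k).
rewrite (eq_bigr (fun i : 'I_N => F i)); last first.
  by move=> i _; rewrite /group_cost /F !nth_enum_ord // ltn_pmod.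
rewrite -(big_mkord xpredT F) -{1}(prednK N_gt0) big_nat_recr //=.
rewrite (telescope_sumr_eq (fun i => (i %/ k)%:R)) //; last first.
  move=> i /andP[_ i_lt]; rewrite /F modn_small; last lia.
  rewrite divnS //; case: (k %| i.+1)%N => /=.
    by rewrite add1n group_dist_alt ?mulrS ?addrK //=.
  by rewrite add0n subrr /group_dist eqxx.
have lastN : (N.-1 %/ k = (2 * k).-1)%N.
  have -> : N.-1 = ((2 * k).-1 * k + k.-1)%N by nia.
  by rewrite divnMDl // divn_small ?addn0 // prednK.
rewrite /F prednK // modnn div0n lastN group_dist_alt; last first.
  by rewrite (_ : (2 * k).-1 = (2 * k.-1).+1)%N /= ?oddM //; lia.
by rewrite subr0 natr1 prednK // muln_gt0 k_gt0.
Qed.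

(* Every group is left at least once by any tour. *)
Lemma tour_length_ge (T : seq 'I_N) : is_tour T ->
  (2 * k)%:R <= tour_length group_cost T.
Proof.
move=> T_tour; rewrite (tour_length_nth group_cost T x0) (tour_size T_tour).
set g := fun i : nat => (nth x0 T i %/ k)%N.
apply: (@le_trans _ _ (\sum_(i < N) \sum_(q < 2 * k)
          (((g i == q) && (g (i.+1 %% N)%N != q))%:R : R))); last first.
  by apply: ler_sum => i _; apply: exits_le_group_dist.
rewrite exchange_big /= -[X in X%:R]card_ord -sumr_const.
apply: ler_sum => q _.
have visits (v : 'I_N) : exists2 i, (i < N)%N & g i = (v %/ k)%N.
  exists (index v T); first exact: tour_index_lt.
  by rewrite /g nth_index ?tour_mem.
have [i iN exit_i] : exists2 i, (i < N)%N & (g i == q) && ~~ (g (i.+1 %% N)%N == q).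
  apply: exists_exit => //.
    have qN : (q * k < N)%N by have := ltn_ord q; nia.
    have [i iN gi] := visits (Ordinal qN); exists i => //.
    by rewrite gi /= mulnK.
  have wN : ((q == 0 :> nat) * k < N)%N by case: (q == 0 :> nat); nia.
  have [i iN gi] := visits (Ordinal wN); exists i => //.
  by rewrite gi /= mulnK //; case: (nat_of_ord q).
rewrite (bigD1 (Ordinal iN)) //= exit_i lerDl.
by apply: sumr_ge0 => j _; apply: ler0n.
Qed.

End TightInstance.

Theorem mainTheorem2 :
  (forall (R : rcfType) (n : nat) (c : 'I_n -> 'I_n -> R) (s0 t : seq 'I_n),
     (3 <= n)%N -> metric c -> two_opt_output c s0 t ->
     forall opt : seq 'I_n, is_tour opt ->
       tour_length c t <= Num.sqrt (n%:R / 2) * tour_length c opt)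
  /\
  (forall (R : rcfType) (k : nat), (0 < k)%N ->
     exists c : 'I_(2 * k ^ 2) -> 'I_(2 * k ^ 2) -> R,
       metric c /\
       exists (s0 opt : seq 'I_(2 * k ^ 2)),
         is_tour s0 /\ is_tour opt /\
         0 < tour_length c opt /\
         (forall T, is_tour T -> tour_length c opt <= tour_length c T) /\
         (exists t, two_opt_output c s0 t) /\
         (forall t, two_opt_output c s0 t ->
            tour_length c t
              = Num.sqrt ((2 * k ^ 2)%N%:R / 2) * tour_length c opt)).
Proof.
split=> [R n c s0 t n3 c_metric [s0_tour [reach t_opt]] opt opt_tour|R k k_gt0].
  have x0 : 'I_n := Ordinal (leq_trans (isT : 0 < 3)%N n3).
  exact: two_optimal_length_le x0 c_metric opt_tour (two_opt_reach_tour reach s0_tour) t_opt.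
exists (@group_cost R k); split; first exact: group_cost_metric.
exists (euler_tour k_gt0), (enum 'I_(2 * k ^ 2)).
rewrite enum_tour_length //; do 4?split.
- exact: euler_tour_is_tour.
- exact: perm_refl.
- by rewrite ltr0n muln_gt0 k_gt0.
- exact: tour_length_ge.
split=> [|t [_ [reach _]]].
  exists (euler_tour k_gt0); split; first exact: euler_tour_is_tour.
  by split; [exact: reach_refl | exact: euler_tour_two_optimal].
rewrite (two_opt_reach_optimal (@euler_tour_two_optimal R k k_gt0) reach) euler_tour_length.
have -> : ((2 * k ^ 2)%N%:R / 2 : R) = k%:R ^+ 2 by rewrite natrM natrX; field.
by rewrite sqrtr_sqr normr_nat -natrM; congr (_%:R); lia.
Qed.
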